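(* Let $M$ be a finite monoid and let $J$ be a $\mathscr{J}$-class of $M$. Then the relation $\theta_J$ is a congruence of $M$ and $\theta_J\subseteq\pi_J$.
   Context: Green's relations on $M$: $a\mathscr{L}b$ iff $Ma=Mb$, $a\mathscr{R}b$ iff $aM=bM$, $a\mathscr{H}b$ iff $a\mathscr{L}b$ and $a\mathscr{R}b$, $a\mathscr{J}b$ iff $MaM=MbM$. $J_a$ is the $\mathscr{J}$-class of $a$; $J_a\leqslant_{\mathscr{J}}J_b$ iff $MaM\subseteq MbM$, and $J_a<_{\mathscr{J}}J_b$ iff $J_a\leqslant_{\mathscr{J}}J_b$ and $J_a\neq J_b$. For a $\mathscr{J}$-class $J$, let $A(J)=\{a\in M: J_a<_{\mathscr{J}}J\}$ and $B(J)=\{a\in M: J\not\leqslant_{\mathscr{J}}J_a\}$. Define $a\,\theta_J\, b$ [respectively $a\,\pi_J\,b$] iff $a=b$, or $a,b\in A(J)$ [respectively $a,b\in B(J)$], or $a,b\in J$ and $a\mathscr{H}b$. *)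

From mathcomp Require Import all_boot.
Set Implicit Arguments. Unset Strict Implicit. Unset Printing Implicit Defensive.

Definition is_monoid (T : Type) (mul : T -> T -> T) (one : T) : Prop :=
  (forall x y z, mul x (mul y z) = mul (mul x y) z) /\
  (forall x, mul one x = x) /\ (forall x, mul x one = x).

Section Green.
Variables (T : Type) (mul : T -> T -> T).

Definition in_left_ideal (a x : T) : Prop := exists u, x = mul u a.
Definition in_right_ideal (a x : T) : Prop := exists v, x = mul a v.
Definition in_two_ideal (a x : T) : Prop := exists u v, x = mul u (mul a v).

Definition greenL (a b : T) : Prop := forall x, in_left_ideal a x <-> in_left_ideal b x.
Definition greenR (a b : T) : Prop := forall x, in_right_ideal a x <-> in_right_ideal b x.
Definition greenH (a b : T) : Prop := greenL a b /\ greenR a b.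
Definition greenJ (a b : T) : Prop := forall x, in_two_ideal a x <-> in_two_ideal b x.

Definition leJ (a b : T) : Prop := forall x, in_two_ideal a x -> in_two_ideal b x.
Definition ltJ (a b : T) : Prop := leJ a b /\ ~ greenJ a b.

(* A J-class J is represented by a representative e: J = J_e. *)
Definition inJ (e a : T) : Prop := greenJ a e.
Definition setA (e a : T) : Prop := ltJ a e.
Definition setB (e a : T) : Prop := ~ leJ e a.

Definition thetaJ (e a b : T) : Prop :=
  a = b \/ (setA e a /\ setA e b) \/ (inJ e a /\ inJ e b /\ greenH a b).
Definition piJ (e a b : T) : Prop :=
  a = b \/ (setB e a /\ setB e b) \/ (inJ e a /\ inJ e b /\ greenH a b).

Definition is_congruence (r : T -> T -> Prop) : Prop :=
  (forall a, r a a) /\ (forall a b, r a b -> r b a) /\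
  (forall a b c, r a b -> r b c -> r a c) /\
  (forall a b c, r a b -> r (mul c a) (mul c b) /\ r (mul a c) (mul b c)).
End Green.

(* The set A(J) is an ideal of M, disjoint from J and contained in B(J).  So
   the only thing to check is that multiplying two H-related elements a, b of J
   on the left by c gives either two elements of A(J) or two H-related elements
   of J.  Left multiplication preserves R, and a finite monoid is stable: if ca
   is J-related to a, then ca is L-related to a.  Indeed a = u(ca)v gives
   a = s^i a y_i for every i, where s = uc, and a repetition s^(p+i) = s^i with
   p > 0 then gives a = s^p a, which lies in M(ca).  Right multiplication is
   the same statement in the opposite monoid. *)
From Stdlib Require Import Classical.
From mathcomp Require Import all_boot.

Section Monoid.
Context {T : Type} {mul : T -> T -> T} {one : T}.
Hypothesis monoidM : is_monoid mul one.

Let mulA : associative mul. Proof. by case: monoidM. Qed.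
Let mul1m : left_id one mul. Proof. by case: monoidM => _ []. Qed.
Let mulm1 : right_id one mul. Proof. by case: monoidM => _ []. Qed.

Local Notation mulop := (fun x y : T => mul y x).
Local Notation pow s n := (iter n (mul s) one).

Lemma is_monoid_op : is_monoid mulop one.
Proof. by split=> [x y z|]; rewrite ?mulA. Qed.

Lemma in_two_ideal_op a x : in_two_ideal mulop a x <-> in_two_ideal mul a x.
Proof. by split=> -[u [v ->]]; exists v, u; rewrite mulA. Qed.

Lemma greenJ_op a b : greenJ mulop a b <-> greenJ mul a b.
Proof.
split=> Jab x; first by rewrite -in_two_ideal_op Jab in_two_ideal_op.
by rewrite in_two_ideal_op Jab -in_two_ideal_op.
Qed.

Lemma leJ_op a b : leJ mulop a b <-> leJ mul a b.
Proof.
by split=> le_ab x; [rewrite -!in_two_ideal_op | rewrite !in_two_ideal_op];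
  apply: le_ab.
Qed.

(* In the opposite monoid L and R are exchanged; J, A(J) and H are unchanged. *)
Lemma thetaJ_op e a b : thetaJ mulop e a b <-> thetaJ mul e a b.
Proof.
rewrite /thetaJ /setA /ltJ /inJ !leJ_op !greenJ_op.
by rewrite /greenH [greenL _ _ _ /\ _]and_comm.
Qed.

Lemma leJP a b : leJ mul a b <-> exists u v, a = mul u (mul b v).
Proof.
split=> [le_ab | [u [v ->]] x [u' [v' ->]]].
  by apply: le_ab; exists one, one; rewrite mul1m mulm1.
by exists (mul u' u), (mul v v'); rewrite !mulA.
Qed.

Lemma leJ_trans {a b c} : leJ mul a b -> leJ mul b c -> leJ mul a c.
Proof. by move=> le_ab le_bc x /le_ab /le_bc. Qed.

Lemma leJ_mull c a : leJ mul (mul c a) a.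
Proof. by apply/leJP; exists c, one; rewrite mulm1. Qed.

Lemma greenJE a b : greenJ mul a b <-> leJ mul a b /\ leJ mul b a.
Proof.
split=> [Jab | [le_ab le_ba] x]; first by split=> x /Jab.
by split=> [/le_ab | /le_ba].
Qed.

Lemma greenJ_sym {a b} : greenJ mul a b -> greenJ mul b a.
Proof. by move=> Jab x; split=> /Jab. Qed.

Lemma greenJ_trans {a b c} : greenJ mul a b -> greenJ mul b c -> greenJ mul a c.
Proof. by move=> Jab Jbc x; split=> [/Jab/Jbc | /Jbc/Jab]. Qed.

Lemma greenL_sym {a b} : greenL mul a b -> greenL mul b a.
Proof. by move=> Lab x; split=> /Lab. Qed.

Lemma greenL_trans {a b c} : greenL mul a b -> greenL mul b c -> greenL mul a c.
Proof. by move=> Lab Lbc x; split=> [/Lab/Lbc | /Lbc/Lab]. Qed.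

Lemma greenH_sym {a b} : greenH mul a b -> greenH mul b a.
Proof. by case=> Lab Rab; split=> x; apply: iff_sym. Qed.

Lemma greenH_trans {a b c} : greenH mul a b -> greenH mul b c -> greenH mul a c.
Proof.
case=> Lab Rab [Lbc Rbc].
by split=> x; [exact: iff_trans (Lab x) (Lbc x) | exact: iff_trans (Rab x) (Rbc x)].
Qed.

Lemma greenLP a b :
  greenL mul a b <-> (exists u, a = mul u b) /\ (exists u, b = mul u a).
Proof.
split=> [Lab | [[u def_a] [u' def_b]] x].
  by split; apply/Lab; exists one; rewrite mul1m.
split=> -[w ->]; [exists (mul w u) | exists (mul w u')];
  by rewrite -mulA -?def_a -?def_b.
Qed.

Lemma greenRP a b :
  greenR mul a b <-> (exists u, a = mul b u) /\ (exists u, b = mul a u).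
Proof.
split=> [Rab | [[u def_a] [u' def_b]] x].
  by split; apply/Rab; exists one; rewrite mulm1.
split=> -[w ->]; [exists (mul u w) | exists (mul u' w)];
  by rewrite mulA -?def_a -?def_b.
Qed.

Lemma greenR_J {a b} : greenR mul a b -> greenJ mul a b.
Proof.
move/greenRP=> [[u def_a] [u' def_b]].
by apply/greenJE; split; apply/leJP; [exists one, u | exists one, u'];
  rewrite mul1m.
Qed.

Lemma greenR_mull c {a b} : greenR mul a b -> greenR mul (mul c a) (mul c b).
Proof.
move/greenRP=> [[u def_a] [u' def_b]].
by apply/greenRP; split; [exists u | exists u']; rewrite -mulA -?def_a -?def_b.
Qed.

Lemma powD s m n : pow s (m + n) = mul (pow s m) (pow s n).
Proof. by elim: m => [|m IHm] /=; rewrite ?mul1m // IHm mulA. Qed.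

Lemma powSr s n : pow s n.+1 = mul (pow s n) s.
Proof. by rewrite -addn1 powD /= mulm1. Qed.

Lemma pow_fixes_of_fixes s i p a v :
  mul (pow s p) (pow s i) = pow s i -> a = mul s (mul a v) ->
  a = mul (pow s p) a.
Proof.
move=> pow_pi fix_a.
have [y def_a] : exists y, a = mul (pow s i) (mul a y).
  elim: i {pow_pi} => [|i [y def_a]]; first by exists one; rewrite mul1m mulm1.
  by exists (mul y v); rewrite {1}fix_a {1}def_a /= !mulA.
by rewrite {2}def_a mulA pow_pi -def_a.
Qed.

Lemma setA_mull e c a : setA mul e a -> setA mul e (mul c a).
Proof.
case=> le_ae notJ_ae; split; first exact: leJ_trans (leJ_mull c a) le_ae.
move=> /greenJE [_ le_e_ca]; apply: notJ_ae; apply/greenJE; split=> //.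
exact: leJ_trans le_e_ca (leJ_mull c a).
Qed.

Lemma setA_setB e a : setA mul e a -> setB mul e a.
Proof. by case=> le_ae notJ_ae le_ea; apply: notJ_ae; apply/greenJE. Qed.

Lemma thetaJ_sym e a b : thetaJ mul e a b -> thetaJ mul e b a.
Proof.
case=> [-> | [[Aa Ab] | [Ja [Jb Hab]]]]; first by left.
  by right; left.
by right; right; split; last split; last exact: greenH_sym.
Qed.

Lemma thetaJ_trans e a b c :
  thetaJ mul e a b -> thetaJ mul e b c -> thetaJ mul e a c.
Proof.
case=> [-> // | [[Aa Ab] | [Ja [Jb Hab]]]] [<- | [[Ab' Ac] | [Jb' [Jc Hbc]]]].
- by right; left.
- by right; left.
- by case: Ab => _ /(_ Jb').
- by right; right.
- by case: Ab' => _ /(_ Jb).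
- by right; right; split; last split; last exact: greenH_trans Hbc.
Qed.

End Monoid.

Section FiniteMonoid.
Context {T : finType} {mul : T -> T -> T} {one : T}.
Hypothesis monoidM : is_monoid mul one.

Let mulA : associative mul. Proof. by case: monoidM. Qed.

Local Notation pow s n := (iter n (mul s) one).

Lemma pow_repeats s : exists i p, 0 < p /\ mul (pow s p) (pow s i) = pow s i.
Proof.
pose f (i : 'I_#|T|.+1) := pow s i.
have /injectivePn [x [y neq_xy eq_fxy]] : ~~ injectiveb f.
  by apply/negP=> /injectiveP /leq_card; rewrite card_ord ltnn.
wlog lt_xy : x y neq_xy eq_fxy / x < y.
  move=> IH; case: (ltngtP x y) => [lt_xy | lt_yx | /val_inj eq_xy].
  - exact: IH neq_xy eq_fxy lt_xy.
  - by apply: (IH y x) (esym eq_fxy) lt_yx; rewrite eq_sym.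
  - by rewrite eq_xy eqxx in neq_xy.
exists x, (y - x); split; first by rewrite subn_gt0.
rewrite -(powD monoidM) subnK; [exact: esym eq_fxy | exact: ltnW].
Qed.

Lemma greenL_of_greenJ_mull c a :
  greenJ mul (mul c a) a -> greenL mul (mul c a) a.
Proof.
move=> /greenJE [_ /(leJP monoidM) [u [v def_a]]].
have [i [p [p_gt0 pow_pi]]] := pow_repeats (mul u c).
have def_a' : a = mul (pow (mul u c) p) a.
  by apply: (pow_fixes_of_fixes monoidM _ _ _ _ v pow_pi); rewrite {1}def_a !mulA.
case: p p_gt0 {pow_pi} def_a' => // q _ def_a'.
apply/(greenLP monoidM); split; first by exists c.
by exists (mul (pow (mul u c) q) u); rewrite {1}def_a' (powSr monoidM) !mulA.
Qed.

Lemma thetaJ_mull e a b c :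
  thetaJ mul e a b -> thetaJ mul e (mul c a) (mul c b).
Proof.
case=> [-> | [[Aa Ab] | [Ja [Jb [Lab Rab]]]]]; first by left.
  by right; left; split; apply: (setA_mull monoidM).
have R_ca_cb := greenR_mull monoidM c Rab.
have J_ca_cb := greenR_J monoidM R_ca_cb.
have [Jca | notJca] := classic (inJ mul e (mul c a)); [right; right | right; left].
  have Jcb : inJ mul e (mul c b) := greenJ_trans (greenJ_sym J_ca_cb) Jca.
  have L_cx_x x : inJ mul e x -> inJ mul e (mul c x) -> greenL mul (mul c x) x.
    move=> Jx Jcx; apply: greenL_of_greenJ_mull.
    exact: greenJ_trans Jcx (greenJ_sym Jx).
  split=> //; split=> //; split=> //.
  apply: greenL_trans (L_cx_x a Ja Jca) (greenL_trans Lab _).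
  exact: greenL_sym (L_cx_x b Jb Jcb).
have le_cx_e x : inJ mul e x -> leJ mul (mul c x) e.
  by move=> /greenJE [le_xe _]; apply: leJ_trans (leJ_mull monoidM c x) le_xe.
have notJcb : ~ inJ mul e (mul c b).
  by move=> Jcb; apply/notJca/(greenJ_trans J_ca_cb).
by split; split; try apply: le_cx_e.
Qed.

End FiniteMonoid.

Lemma thetaJ_mulr (T : finType) (mul : T -> T -> T) (one : T)
    (monoidM : is_monoid mul one) e a b c :
  thetaJ mul e a b -> thetaJ mul e (mul a c) (mul b c).
Proof.
move=> /(thetaJ_op monoidM) theta_ab; apply/(thetaJ_op monoidM).
exact: thetaJ_mull (is_monoid_op monoidM) _ _ _ _ theta_ab.
Qed.

Theorem lemma3p4 (T : finType) (mul : T -> T -> T) (one : T)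
  (hM : is_monoid mul one) (e : T) :
  is_congruence mul (thetaJ mul e) /\
  (forall a b, thetaJ mul e a b -> piJ mul e a b).
Proof.
split.
  split; first by left.
  split; first exact: thetaJ_sym.
  split; first exact: thetaJ_trans.
  move=> a b c theta_ab; split; first exact: thetaJ_mull hM _ _ _ _ theta_ab.
  exact: thetaJ_mulr hM _ _ _ _ theta_ab.
move=> a b [-> | [[Aa Ab] | Hab]]; [by left | | by right; right].
by right; left; split; apply: setA_setB.
Qed.
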